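(* For all integers $m\geq 3$ and $n\geq 3$, $1\leq \gamma_{sR}(C_m\vee C_n)\leq 4$.
   Context: $C_n$ denotes the cycle on $n$ vertices. For a graph $G=(V,E)$ and $x\in V$, $N_G[x]=\{x\}\cup\{y: xy\in E\}$. A signed Roman dominating function (SRDF) on $G$ is a function $f:V\to\{-1,1,2\}$ such that (a) $\sum_{y\in N_G[x]}f(y)\geq 1$ for every $x\in V$, and (b) every vertex $x$ with $f(x)=-1$ is adjacent to at least one vertex $y$ with $f(y)=2$. The weight of $f$ is $\sum_{x\in V}f(x)$, and $\gamma_{sR}(G)$ is the minimum weight of an SRDF on $G$. The join $G_1\vee G_2$ of two graphs has vertex set $V(G_1)\cup V(G_2)$ (disjoint union) and edge set $E(G_1)\cup E(G_2)\cup\{uv: u\in V(G_1), v\in V(G_2)\}$. *)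

From mathcomp Require Import all_boot all_order all_algebra.
Set Implicit Arguments. Unset Strict Implicit. Unset Printing Implicit Defensive.
Import Order.TTheory GRing.Theory Num.Theory.
Local Open Scope ring_scope.

Record sgraph := SGraph {
  vtx : finType;
  adj : rel vtx;
  adj_sym : symmetric adj;
  adj_irr : irreflexive adj }.

Definition closed_nbhd (G : sgraph) (x : vtx G) : {set vtx G} :=
  [set y | (y == x) || adj x y].

(* A function f : V -> {-1,1,2}, encoded as a finite function into 'I_3,
   with 0 |-> -1, 1 |-> 1, 2 |-> 2. *)
Definition lab (k : 'I_3) : int :=
  if val k == 0%N then -1 else if val k == 1%N then 1 else 2.

Definition fval (G : sgraph) (f : {ffun vtx G -> 'I_3}) (x : vtx G) : int :=
  lab (f x).

Definition is_SRDF (G : sgraph) (f : {ffun vtx G -> 'I_3}) : bool :=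
  [forall x, (1 <= \sum_(y in closed_nbhd x) fval f y)%R] &&
  [forall x, (fval f x == -1) ==> [exists y, adj x y && (fval f y == 2)]].

Definition weight (G : sgraph) (f : {ffun vtx G -> 'I_3}) : int :=
  \sum_(x : vtx G) fval f x.

Definition one_fun (G : sgraph) : {ffun vtx G -> 'I_3} :=
  [ffun _ => inord 1].

(* gamma_sR(G): minimum weight of an SRDF (minimum over the finite set of
   SRDFs; the set is nonempty as the constant 1 function is an SRDF,
   and the arg-min takes that as its default witness). *)
Definition gamma_sR (G : sgraph) : int :=
  weight (Order.arg_min (one_fun G) (fun f => is_SRDF f) (@weight G)).

Definition cycle_adj (n : nat) : rel 'I_n :=
  fun i j => (i != j) &&
    ((val j == (val i).+1 %% n)%N || (val i == (val j).+1 %% n)%N).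

Lemma cycle_adj_sym n : symmetric (@cycle_adj n).
Proof. by move=> i j; rewrite /cycle_adj eq_sym orbC. Qed.

Lemma cycle_adj_irr n : irreflexive (@cycle_adj n).
Proof. by move=> i; rewrite /cycle_adj eqxx. Qed.

Definition Cycle (n : nat) : sgraph :=
  @SGraph 'I_n (@cycle_adj n) (@cycle_adj_sym n) (@cycle_adj_irr n).

Definition join_adj (G1 G2 : sgraph) : rel (vtx G1 + vtx G2) :=
  fun u v => match u, v with
  | inl a, inl b => adj a b
  | inr a, inr b => adj a b
  | _, _ => true
  end.

Lemma join_adj_sym G1 G2 : symmetric (@join_adj G1 G2).
Proof. by case=> a [] b //=; apply: adj_sym. Qed.

Lemma join_adj_irr G1 G2 : irreflexive (@join_adj G1 G2).
Proof. by case=> a /=; apply: adj_irr. Qed.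

Definition join (G1 G2 : sgraph) : sgraph :=
  @SGraph (vtx G1 + vtx G2)%type (@join_adj G1 G2)
    (@join_adj_sym G1 G2) (@join_adj_irr G1 G2).

From Pilot Require Import Defs.
From mathcomp Require Import all_boot all_order all_algebra.
From mathcomp Require Import zify lra.
Set Implicit Arguments. Unset Strict Implicit. Unset Printing Implicit Defensive.
Import Order.TTheory GRing.Theory Num.Theory.
Local Open Scope ring_scope.

(* Lower bound: let A and B be the weights of an SRDF on the two cycles.
   Summing the condition over the closed neighbourhoods of the m vertices of
   C_m counts every vertex of C_m three times and every vertex of C_n m times,
   so m <= 3A + mB, and symmetrically n <= 3B + nA; with m, n >= 3 these force
   A + B >= 1.
   Upper bound: on each cycle put 2 on every third vertex and -1 elsewhere.
   Inside a cycle every closed neighbourhood then has nonnegative weight and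
   the whole cycle has weight 1 or 2, so in the join every closed neighbourhood
   has weight at least 1, every -1 sees a 2 across the join, and the total
   weight is at most 4. *)

Section CycleNeighbourhoods.

Variable m : nat.

Lemma val_ordS (u : 'I_m) :
  nat_of_ord (ordS u) = (if u.+1 == m then 0 else u.+1)%N.
Proof.
have := ltn_ord u; rewrite /=; case: eqP => [->|neq lt]; first by rewrite modnn.
by rewrite modn_small //; lia.
Qed.

Lemma val_ord_pred (u : 'I_m) :
  nat_of_ord (ord_pred u) = (if nat_of_ord u == 0 then m.-1 else u.-1)%N.
Proof.
have := congr1 (@nat_of_ord m) (ord_predK u); rewrite val_ordS.
have := ltn_ord (ord_pred u); have := ltn_ord u.
by case: eqP => h1; case: eqP => h2; simpl in *; lia.
Qed.

Lemma cycle_adjE (u v : 'I_m) :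
  cycle_adj u v = (u != v) && ((v == ordS u) || (v == ord_pred u)).
Proof.
rewrite /cycle_adj.
have -> : (val v == (val u).+1 %% m)%N = (v == ordS u) by rewrite -val_eqE.
have -> : (val u == (val v).+1 %% m)%N = (v == ord_pred u).
  by rewrite -(inj_eq (@ordS_inj m)) ord_predK eq_sym -val_eqE.
by [].
Qed.

Hypothesis hm : (3 <= m)%N.

Lemma ordS_neq (u : 'I_m) : ordS u != u.
Proof.
have := ltn_ord u; rewrite -(inj_eq (@ord_inj m)) val_ordS.
by case: ifP => /eqP h; simpl in *; lia.
Qed.

Lemma ord_pred_neq (u : 'I_m) : ord_pred u != u.
Proof.
have := ltn_ord u; rewrite -(inj_eq (@ord_inj m)) val_ord_pred.
by case: ifP => /eqP h; simpl in *; lia.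
Qed.

Lemma ordS_neq_pred (u : 'I_m) : ordS u != ord_pred u.
Proof.
have := ltn_ord u; rewrite -(inj_eq (@ord_inj m)) val_ordS val_ord_pred.
by case: ifP => /eqP h1; case: ifP => /eqP h2; simpl in *; lia.
Qed.

Lemma cycle_nbhdE (u : 'I_m) :
  @closed_nbhd (Cycle m) u = u |: (ordS u |: [set ord_pred u]).
Proof.
apply/setP => v; rewrite !inE /= cycle_adjE.
by case: (eqVneq v u) => [->|/negPf vu] //=; rewrite eq_sym vu.
Qed.

Lemma sum_cycle_nbhd (F : 'I_m -> int) (u : 'I_m) :
  \sum_(v in @closed_nbhd (Cycle m) u) F v = F u + F (ordS u) + F (ord_pred u).
Proof.
rewrite cycle_nbhdE !big_setU1 ?big_set1 /=; first by rewrite addrA.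
  by rewrite inE ordS_neq_pred.
by rewrite !inE negb_or !(eq_sym u) ordS_neq ord_pred_neq.
Qed.

Lemma sum_cycle_shifts (F : 'I_m -> int) :
  \sum_u (F u + F (ordS u) + F (ord_pred u)) = (\sum_u F u) *+ 3.
Proof.
have shiftS : \sum_u F (ordS u) = \sum_u F u.
  by rewrite [RHS](reindex_inj (@ordS_inj m)).
have shiftP : \sum_u F (ord_pred u) = \sum_u F u.
  by rewrite [RHS](reindex_inj (@ord_pred_inj m)).
by rewrite !big_split /= shiftS shiftP -!mulr2n -mulrSr.
Qed.

Lemma sum_cycle_nbhd_bound (F : 'I_m -> int) (B : int) :
  (forall u, 1 <= \sum_(v in @closed_nbhd (Cycle m) u) F v + B) ->
  m%:R <= (\sum_u F u) *+ 3 + m%:R * B.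
Proof.
move=> local_bound.
have : \sum_(u : 'I_m) (1 : int) <= \sum_u (F u + F (ordS u) + F (ord_pred u) + B).
  by apply: ler_sum => u _; rewrite -sum_cycle_nbhd; exact: local_bound.
by rewrite big_split sum_cycle_shifts /= !sumr_const card_ord mulr_natl.
Qed.

End CycleNeighbourhoods.

Section Join.

Variables G1 G2 : sgraph.
Implicit Types f : {ffun vtx (join G1 G2) -> 'I_3}.

Lemma weight_join f :
  weight f = \sum_x fval f (inl x) + \sum_y fval f (inr y).
Proof. exact: big_sumType. Qed.

Lemma sum_join_nbhdl (h : vtx (join G1 G2) -> int) (x : vtx G1) :
  \sum_(z in closed_nbhd (inl x : vtx (join G1 G2))) h z
  = \sum_(y in closed_nbhd x) h (inl y) + \sum_y h (inr y).
Proof.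
rewrite big_mkcond big_sumType /= [in RHS]big_mkcond.
by congr (_ + _); apply: eq_bigr => y _; rewrite !inE.
Qed.

Lemma sum_join_nbhdr (h : vtx (join G1 G2) -> int) (y : vtx G2) :
  \sum_(z in closed_nbhd (inr y : vtx (join G1 G2))) h z
  = \sum_(x in closed_nbhd y) h (inr x) + \sum_x h (inl x).
Proof.
rewrite big_mkcond big_sumType /= [in RHS]big_mkcond addrC.
by congr (_ + _); apply: eq_bigr => x _; rewrite !inE.
Qed.

Lemma is_SRDF_join f :
  (forall x, 0 <= \sum_(y in closed_nbhd x) fval f (inl y)) ->
  (forall y, 0 <= \sum_(x in closed_nbhd y) fval f (inr x)) ->
  1 <= \sum_x fval f (inl x) -> 1 <= \sum_y fval f (inr y) ->
  (exists x, fval f (inl x) = 2) -> (exists y, fval f (inr y) = 2) ->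
  is_SRDF f.
Proof.
move=> locl locr totl totr [x2 fx2] [y2 fy2].
apply/andP; split; apply/forallP => -[x|y].
- by rewrite sum_join_nbhdl -[1]add0r lerD.
- by rewrite sum_join_nbhdr -[1]add0r lerD.
- by apply/implyP => _; apply/existsP; exists (inr y2); rewrite /= fy2.
- by apply/implyP => _; apply/existsP; exists (inl x2); rewrite /= fx2.
Qed.

End Join.

Lemma one_fun_SRDF (G : sgraph) : is_SRDF (Defs.one_fun G).
Proof.
have one y : fval (Defs.one_fun G) y = 1 by rewrite /fval ffunE /lab /= inordK.
apply/andP; split; apply/forallP => x; last by rewrite one.
rewrite (bigD1 x) /=; last by rewrite inE eqxx.
by rewrite one lerDl sumr_ge0 // => y _; rewrite one.
Qed.

Lemma gamma_sR_le (G : sgraph) (f : {ffun vtx G -> 'I_3}) :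
  is_SRDF f -> gamma_sR G <= weight f.
Proof.
rewrite /gamma_sR; case: arg_minP => [|g _ gmin]; first exact: one_fun_SRDF.
exact: gmin.
Qed.

Lemma gamma_sR_ge (G : sgraph) (c : int) :
  (forall f : {ffun vtx G -> 'I_3}, is_SRDF f -> c <= weight f) -> c <= gamma_sR G.
Proof.
rewrite /gamma_sR; case: arg_minP => [|g Sg _ lb]; first exact: one_fun_SRDF.
exact: lb Sg.
Qed.

Lemma sum_ge1_of_join_bounds (M N A B : int) : 3 <= M -> 3 <= N ->
  M <= A *+ 3 + M * B -> N <= B *+ 3 + N * A -> 1 <= A + B.
Proof.
move=> hM hN bndA bndB; case: (lerP 1 (A + B)) => // lt1.
have nonpos (K X Y : int) : 3 <= K -> K <= X *+ 3 + K * Y -> X + Y <= 0 -> X <= 0.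
  by move=> *; nia.
have := nonpos _ _ _ hM bndA ltac:(lia); have := nonpos _ _ _ hN bndB ltac:(lia).
nia.
Qed.

Lemma weight_join_cycle_ge1 (m n : nat) (hm : (3 <= m)%N) (hn : (3 <= n)%N)
    (f : {ffun vtx (join (Cycle m) (Cycle n)) -> 'I_3}) :
  is_SRDF f -> 1 <= weight f.
Proof.
move=> /andP[/forallP srdf _]; rewrite weight_join.
apply: (@sum_ge1_of_join_bounds m%:R n%:R); rewrite ?ler_nat //.
- apply: sum_cycle_nbhd_bound => // x; rewrite -sum_join_nbhdl; exact: srdf.
- apply: sum_cycle_nbhd_bound => // y; rewrite -sum_join_nbhdr; exact: srdf.
Qed.

(* When 3 divides m the last vertex is raised from -1 to 1, since otherwise
   the cycle would have total weight 0. *)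
Definition cycle_val (m i : nat) : int :=
  if (m %% 3 == 0)%N && (i == m.-1) then 1
  else if (i %% 3 == 0)%N then 2 else -1.

Definition cycle_code (m i : nat) : 'I_3 :=
  inord (if (m %% 3 == 0)%N && (i == m.-1) then 1
         else if (i %% 3 == 0)%N then 2 else 0).

Lemma lab_cycle_code (m i : nat) : lab (cycle_code m i) = cycle_val m i.
Proof.
rewrite /cycle_code /cycle_val.
by case: (_ && _); [|case: (_ %% 3 == 0)%N]; rewrite /lab /= inordK.
Qed.

Lemma cycle_val_ge (m i : nat) : -1 <= cycle_val m i.
Proof. by rewrite /cycle_val; case: ifP => _; [|case: ifP]. Qed.

Lemma cycle_val_two (m i : nat) :
  (i %% 3 = 0)%N -> ~ ((m %% 3 = 0)%N /\ i = m.-1) -> cycle_val m i = 2.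
Proof.
move=> i3 not_last; rewrite /cycle_val i3 /=.
by case: ifP => // /andP[/eqP m3 /eqP im]; case: not_last.
Qed.

Lemma sum_period3 (k : nat) :
  \sum_(i < k) (if (i %% 3 == 0)%N then 2 else -1 : int)
  = if (k %% 3 == 0)%N then 0 else if (k %% 3 == 1)%N then 2 else 1.
Proof.
elim: k => [|k IH]; first by rewrite big_ord0.
by rewrite big_ord_recr /= IH; repeat case: ifP => /eqP ?; lia.
Qed.

Section CycleLabelling.

Variables (m : nat) (hm : (3 <= m)%N).

Lemma cycle_val_sum : 1 <= \sum_(u : 'I_m) cycle_val m u <= 2.
Proof.
case: m hm => // k _; rewrite big_ord_recr /=.
have -> : \sum_(i < k) cycle_val k.+1 i
          = \sum_(i < k) (if (i %% 3 == 0)%N then 2 else -1 : int).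
  by apply: eq_bigr => i _; rewrite /cycle_val /= (ltn_eqF (ltn_ord i)) andbF.
by rewrite sum_period3 /cycle_val /= eqxx andbT; repeat case: ifP => /eqP ?; lia.
Qed.

Lemma cycle_val_nbhd (u : 'I_m) :
  0 <= \sum_(v in @closed_nbhd (Cycle m) u) cycle_val m v.
Proof.
rewrite sum_cycle_nbhd // val_ordS val_ord_pred.
have lt_um := ltn_ord u; have ge := cycle_val_ge m; have two := @cycle_val_two m.
case: eqP => [last|_]; case: eqP => [first|_].
- lia.
- have := two 0%N erefl ltac:(lia); have := ge u; have := ge u.-1; lra.
- rewrite first; have := two 0%N erefl ltac:(lia).
  have := ge 1%N; have := ge m.-1; lra.
- have := ge u; have := ge u.+1; have := ge u.-1.
  have [k|[k|k]] : (u %% 3 = 0 \/ u.+1 %% 3 = 0 \/ u.-1 %% 3 = 0)%N by lia.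
  + have := two u k ltac:(lia); lra.
  + have := two u.+1 k ltac:(lia); lra.
  + have := two u.-1 k ltac:(lia); lra.
Qed.

End CycleLabelling.

Lemma cycle_val0 (m : nat) : (3 <= m)%N -> cycle_val m 0 = 2.
Proof. by move=> hm; apply: cycle_val_two => //; lia. Qed.

Definition join_cycle_code (m n : nat) : {ffun vtx (join (Cycle m) (Cycle n)) -> 'I_3} :=
  [ffun x : 'I_m + 'I_n => match x with
                          | inl u => cycle_code m u
                          | inr v => cycle_code n v end].

Section JoinCycleLabelling.

Variables (m n : nat) (hm : (3 <= m)%N) (hn : (3 <= n)%N).

Lemma fval_join_cycle_code_l (u : 'I_m) :
  fval (join_cycle_code m n) (inl u) = cycle_val m u.
Proof. by rewrite /fval ffunE lab_cycle_code. Qed.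

Lemma fval_join_cycle_code_r (v : 'I_n) :
  fval (join_cycle_code m n) (inr v) = cycle_val n v.
Proof. by rewrite /fval ffunE lab_cycle_code. Qed.

Lemma join_cycle_code_SRDF : is_SRDF (join_cycle_code m n).
Proof.
have sum_l := eq_bigr _ (fun u _ => fval_join_cycle_code_l u).
have sum_r := eq_bigr _ (fun v _ => fval_join_cycle_code_r v).
apply: is_SRDF_join => [u|v||||].
- by rewrite sum_l; apply: cycle_val_nbhd.
- by rewrite sum_r; apply: cycle_val_nbhd.
- by rewrite sum_l; case/andP: (cycle_val_sum hm).
- by rewrite sum_r; case/andP: (cycle_val_sum hn).
- exists (Ordinal (leq_trans (isT : (0 < 3)%N) hm)).
  by rewrite fval_join_cycle_code_l cycle_val0.
- exists (Ordinal (leq_trans (isT : (0 < 3)%N) hn)).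
  by rewrite fval_join_cycle_code_r cycle_val0.
Qed.

Lemma weight_join_cycle_code : weight (join_cycle_code m n) <= 4.
Proof.
rewrite weight_join (eq_bigr _ (fun u _ => fval_join_cycle_code_l u)).
rewrite (eq_bigr _ (fun v _ => fval_join_cycle_code_r v)).
by case/andP: (cycle_val_sum hm) => _ ?; case/andP: (cycle_val_sum hn) => _ ?; lra.
Qed.

End JoinCycleLabelling.

Theorem mainTheorem5 (m n : nat) (hm : (3 <= m)%N) (hn : (3 <= n)%N) :
  1 <= gamma_sR (join (Cycle m) (Cycle n)) <= 4.
Proof.
apply/andP; split.
  by apply: gamma_sR_ge => f; apply: weight_join_cycle_ge1.
apply: le_trans (weight_join_cycle_code hm hn).
exact: gamma_sR_le (join_cycle_code_SRDF hm hn).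
Qed.
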